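(* Let $\varepsilon\ge0$ and let $X$ be any random variable taking values in $[d]$. If $\mathbf Z=(Z_1,\dots,Z_d)$ is obtained from $X$ by the unary-encoding mechanism with parameter $\varepsilon$, then $\{Z_1,\dots,Z_d\}$ is negatively associated.
   Context: Unary encoding with parameter $\varepsilon$: given $X=x\in[d]$, the coordinates $Z_1,\dots,Z_d$ are conditionally independent with $Z_j=\mathbb 1\{x=j\}$ with probability $\omega_{\varepsilon/2}$ and $Z_j=1-\mathbb 1\{x=j\}$ with probability $1-\omega_{\varepsilon/2}$, where $\omega_{\varepsilon/2}=e^{\varepsilon/2}/(e^{\varepsilon/2}+1)$. A collection of random variables $\{X_1,\dots,X_n\}$ is negatively associated if for every pair of disjoint $I_1,I_2\subseteq[n]$ with $I_1\cup I_2=[n]$, $\mathrm{Cov}(f(X_i:i\in I_1),g(X_{i'}:i'\in I_2))\le0$ for all real-valued $f,g$ that are both coordinatewise non-decreasing (equivalently both non-increasing). *)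

From mathcomp Require Import all_boot all_order all_algebra.
From mathcomp Require Import all_classical all_reals.
From mathcomp Require Import sequences exp.
Set Implicit Arguments. Unset Strict Implicit. Unset Printing Implicit Defensive.
Import Order.TTheory GRing.Theory Num.Theory.
Local Open Scope ring_scope.

Section UE.
Variable R : realType.

Definition omega_half (eps : R) : R := expR (eps / 2) / (expR (eps / 2) + 1).

Definition is_pmf (T : finType) (p : T -> R) : Prop :=
  (forall t, 0 <= p t) /\ \sum_(t : T) p t = 1.

(* Joint pmf of Z = (Z_1,...,Z_d) in {0,1}^d produced by unary encoding:
   P(Z = z) = sum_x P(X = x) prod_j P(Z_j = z_j | X = x), where
   Z_j = 1{x = j} w.p. omega and 1 - 1{x = j} w.p. 1 - omega. *)
Definition ue_pmf (d : nat) (eps : R) (p : 'I_d -> R)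
  (z : {ffun 'I_d -> bool}) : R :=
  \sum_(x : 'I_d) p x *
    \prod_(j : 'I_d) (if z j == (x == j) then omega_half eps
                      else 1 - omega_half eps).

Definition expect (d : nat) (P : {ffun 'I_d -> bool} -> R)
  (h : {ffun 'I_d -> bool} -> R) : R :=
  \sum_(z : {ffun 'I_d -> bool}) P z * h z.

Definition cov (d : nat) (P : {ffun 'I_d -> bool} -> R)
  (f g : {ffun 'I_d -> bool} -> R) : R :=
  expect P (fun z => f z * g z) - expect P f * expect P g.

Definition depends_only_on (d : nat) (I : {set 'I_d})
  (f : {ffun 'I_d -> bool} -> R) : Prop :=
  forall z z' : {ffun 'I_d -> bool}, (forall i, i \in I -> z i = z' i) -> f z = f z'.

Definition coord_nondecr (d : nat) (f : {ffun 'I_d -> bool} -> R) : Prop :=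
  forall z z' : {ffun 'I_d -> bool}, (forall i, z i ==> z' i) -> f z <= f z'.

Definition negatively_associated (d : nat) (P : {ffun 'I_d -> bool} -> R) : Prop :=
  forall (I1 I2 : {set 'I_d}), [disjoint I1 & I2] -> I1 :|: I2 = [set: 'I_d]%SET ->
  forall f g : {ffun 'I_d -> bool} -> R,
    depends_only_on I1 f -> depends_only_on I2 g ->
    coord_nondecr f -> coord_nondecr g ->
    cov P f g <= 0.
End UE.

(** Relative to the product measure under which every coordinate is Bernoulli(q),
    q = 1 - ω, the law of Z given X = x has density 1 + b (Z_x - q) with
    b = ω/q - q/ω.  Averaging over x, the law of Z has density 1 + b ∑_x p_x (Z_x - q),
    so for every h its expectation is E h + b D h, where
    D h = ∑_x p_x Cov(h, Z_x) under the product measure.  If f and g depend on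
    complementary blocks of coordinates, they are independent under the product
    measure and D (f g) = D f · E g + E f · D g; expanding, the covariance of f and g
    under the law of Z is exactly -b² D f · D g.  Finally D f, D g >= 0 for
    non-decreasing f, g, since a non-decreasing function is positively correlated
    with every single coordinate of a product measure (pair z with z flipped at x). *)
From mathcomp Require Import all_boot all_order all_algebra.
From mathcomp Require Import all_classical all_reals.
From mathcomp Require Import sequences exp.
From mathcomp Require Import ring lra.
Set Implicit Arguments. Unset Strict Implicit. Unset Printing Implicit Defensive.
Import Order.TTheory GRing.Theory Num.Theory.
Local Open Scope ring_scope.

Section ProductBernoulli.
Variables (R : realType) (d : nat).
Implicit Types (P h f g : {ffun 'I_d -> bool} -> R) (z : {ffun 'I_d -> bool}).

Lemma eq_expect P h h' : h =1 h' -> expect P h = expect P h'.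
Proof. by move=> eq_h; apply: eq_bigr => z _; rewrite eq_h. Qed.

Lemma expect_lin P h h' (a a' : R) :
  expect P (fun z => a * h z + a' * h' z) = a * expect P h + a' * expect P h'.
Proof. by rewrite /expect !mulr_sumr -big_split; apply: eq_bigr => z _ /=; ring. Qed.

Variable q : R.

Definition bern (b : bool) : R := if b then q else 1 - q.

Definition bern_prod z : R := \prod_j bern (z j).

Definition coordR (x : 'I_d) z : R := (z x)%:R.

Local Notation E := (expect bern_prod).

Lemma expect_prod (F : 'I_d -> bool -> R) :
  E (fun z => \prod_j F j (z j)) = \prod_j (q * F j true + (1 - q) * F j false).
Proof.
rewrite /expect (eq_bigr (fun z => \prod_j (bern (z j) * F j (z j)))); last first.
  by move=> z _; rewrite /bern_prod big_split.
rewrite -(bigA_distr_bigA (fun j b => bern b * F j b)).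
by apply: eq_bigr => j _; rewrite big_bool.
Qed.

Lemma sum_bern_prod : \sum_z bern_prod z = 1.
Proof.
rewrite /bern_prod -(bigA_distr_bigA (fun _ => bern)) big1 // => j _.
by rewrite big_bool /=; ring.
Qed.

Lemma expect_coordR x : E (coordR x) = q.
Proof.
pose F j (b : bool) : R := if j == x then b%:R else 1.
have coordRE z : coordR x z = \prod_j F j (z j).
  rewrite (bigD1 x) //= big1 => [|j /negbTE neq_jx]; first by rewrite /F eqxx mulr1.
  by rewrite /F neq_jx.
rewrite (eq_expect _ coordRE) (expect_prod F) (bigD1 x) //= big1 => [|j /negbTE neq_jx];
  by rewrite /F ?neq_jx ?eqxx /=; ring.
Qed.

Definition swap_on (I : {set 'I_d}) (u : {ffun 'I_d -> bool} * {ffun 'I_d -> bool}) :=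
  ([ffun j => if j \in I then u.1 j else u.2 j],
   [ffun j => if j \in I then u.2 j else u.1 j]).

Lemma swap_onK I : involutive (swap_on I).
Proof.
by move=> [a b]; congr (_, _); apply/ffunP => j; rewrite !ffunE; case: (j \in I).
Qed.

Lemma bern_prod_swap_on I u :
  bern_prod (swap_on I u).1 * bern_prod (swap_on I u).2 = bern_prod u.1 * bern_prod u.2.
Proof.
rewrite /bern_prod -!big_split; apply: eq_bigr => j _; rewrite /= !ffunE.
by case: (j \in I) => //; rewrite mulrC.
Qed.

(* Swapping the I1-coordinates of two independent samples leaves the product
   law invariant and sends (h1 a, h2 b) to (h1 a, h2 a). *)
Lemma expect_indep (I1 I2 : {set 'I_d}) h1 h2 :
  [disjoint I1 & I2] -> depends_only_on I1 h1 -> depends_only_on I2 h2 ->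
  E (fun z => h1 z * h2 z) = E h1 * E h2.
Proof.
move=> dis dep1 dep2.
have -> : E h1 * E h2 =
    \sum_u (bern_prod u.1 * h1 u.1) * (bern_prod u.2 * h2 u.2).
  rewrite /expect mulr_suml; under eq_bigr do rewrite mulr_sumr.
  by rewrite pair_bigA.
rewrite (reindex_inj (can_inj (swap_onK I1))) /=.
transitivity (\sum_u bern_prod u.1 * (h1 u.1 * h2 u.1) * bern_prod u.2).
  rewrite -(pair_bigA _ (fun a b => bern_prod a * (h1 a * h2 a) * bern_prod b)) /=.
  by rewrite /expect; under [RHS]eq_bigr do rewrite -mulr_sumr sum_bern_prod mulr1.
apply: eq_bigr => u _.
have e1 : h1 (swap_on I1 u).1 = h1 u.1 by apply: dep1 => i Ii; rewrite ffunE Ii.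
have e2 : h2 (swap_on I1 u).2 = h2 u.1.
  by apply: dep2 => i Ii; rewrite ffunE (disjointFl dis Ii).
rewrite e1 e2 -[LHS]mulrA mulrACA mulrA bern_prod_swap_on; ring.
Qed.

Lemma cov_coordR_mul_l (I1 I2 : {set 'I_d}) f g x :
  [disjoint I1 & I2] -> depends_only_on I1 f -> depends_only_on I2 g -> x \in I1 ->
  cov bern_prod (fun z => f z * g z) (coordR x) =
    cov bern_prod f (coordR x) * E g + E f * cov bern_prod g (coordR x).
Proof.
move=> dis dep_f dep_g I1x.
have dep_fx : depends_only_on I1 (fun z => f z * coordR x z).
  by move=> z z' eq_zz'; rewrite /coordR (eq_zz' x I1x) (dep_f z z' eq_zz').
have dep_x : depends_only_on I1 (coordR x) by move=> z z' eq_zz'; rewrite /coordR eq_zz'.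
rewrite /cov (expect_indep dis dep_f dep_g).
rewrite (eq_expect _ (h' := fun z => (f z * coordR x z) * g z)) => [|z]; last by ring.
rewrite (eq_expect _ (h' := fun z => coordR x z * g z) (h := fun z => g z * _)) => [|z];
  last by ring.
rewrite (expect_indep dis dep_fx dep_g) (expect_indep dis dep_x dep_g); ring.
Qed.

Lemma cov_coordR_mul (I1 I2 : {set 'I_d}) f g x :
  [disjoint I1 & I2] -> I1 :|: I2 = [set: 'I_d] ->
  depends_only_on I1 f -> depends_only_on I2 g ->
  cov bern_prod (fun z => f z * g z) (coordR x) =
    cov bern_prod f (coordR x) * E g + E f * cov bern_prod g (coordR x).
Proof.
move=> dis cover dep_f dep_g.
have : x \in I1 :|: I2 by rewrite cover inE.
rewrite inE => /orP[I1x | I2x]; first exact: cov_coordR_mul_l dis dep_f dep_g I1x.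
rewrite disjoint_sym in dis.
have -> : (fun z => f z * g z) = (fun z => g z * f z) by apply/funext => z; rewrite mulrC.
rewrite (cov_coordR_mul_l dis dep_g dep_f I2x); ring.
Qed.

Definition flip_at (x : 'I_d) z : {ffun 'I_d -> bool} :=
  [ffun j => if j == x then ~~ z j else z j].

Lemma flip_atK x : involutive (flip_at x).
Proof. by move=> z; apply/ffunP => j; rewrite !ffunE; case: eqP => // _; rewrite negbK. Qed.

Lemma bern_prod_flip_at x z :
  bern_prod z = bern (z x) * \prod_(j | j != x) bern (z j) /\
  bern_prod (flip_at x z) = bern (~~ z x) * \prod_(j | j != x) bern (z j).
Proof.
split; rewrite /bern_prod (bigD1 x) //= ffunE eqxx; congr (_ * _).
by apply: eq_bigr => j /negbTE neq_jx; rewrite ffunE neq_jx.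
Qed.

Lemma le_flip_at (f : {ffun 'I_d -> bool} -> R) x z :
  coord_nondecr f -> z x -> f (flip_at x z) <= f z.
Proof.
move=> mono_f zx; apply: mono_f => i; rewrite ffunE.
by case: eqP => [->|_]; rewrite ?zx ?implybb.
Qed.

(* Pairing z with [flip_at x z] shows that twice the covariance is a sum of terms
   q (1 - q) (f z - f (flip_at x z)) ∏_{j <> x} bern (z j), with z x = true. *)
Lemma cov_coordR_ge0 f x :
  0 <= q <= 1 -> coord_nondecr f -> 0 <= cov bern_prod f (coordR x).
Proof.
move=> /andP[q_ge0 q_le1] mono_f.
pose T z := bern_prod z * f z * (coordR x z - q).
have -> : cov bern_prod f (coordR x) = \sum_z T z.
  rewrite /cov expect_coordR /expect mulr_suml -sumrB.
  by apply: eq_bigr => z _; rewrite /T; ring.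
have flip_sum : \sum_z T z = \sum_z T (flip_at x z).
  by rewrite (reindex_inj (can_inj (flip_atK x))).
suff : 0 <= \sum_z T z + \sum_z T z by lra.
rewrite {2}flip_sum -big_split /=; apply: sumr_ge0 => z _.
rewrite /T; have [-> ->] := bern_prod_flip_at x z.
have rest_ge0 : 0 <= \prod_(j | j != x) bern (z j).
  by apply: prodr_ge0 => j _; case: (z j); rewrite /= ?subr_ge0.
set P := \prod_(j | j != x) bern (z j).
have key (u v : R) : v <= u -> 0 <= q * P * u * (1 - q) + (1 - q) * P * v * (0 - q).
  move=> le_vu; rewrite (_ : _ + _ = q * (1 - q) * P * (u - v)); last by ring.
  by rewrite !mulr_ge0 ?subr_ge0.
have flip_x : flip_at x z x = ~~ z x by rewrite ffunE eqxx.
rewrite /coordR flip_x; case zx: (z x) => /=; first exact: key (le_flip_at mono_f zx).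
rewrite addrC; apply: key.
by have := @le_flip_at f x (flip_at x z) mono_f; rewrite flip_atK flip_x zx; apply.
Qed.

End ProductBernoulli.

Arguments coordR {R d} x z.

Section TiltedMixture.
Variables (R : realType) (d : nat) (q b : R) (p : 'I_d -> R).
Implicit Types (f g h : {ffun 'I_d -> bool} -> R) (z : {ffun 'I_d -> bool}).

Local Notation E := (expect (bern_prod q)).

Definition tilted_mixture z : R :=
  \sum_x p x * (bern_prod q z * (1 + b * (coordR x z - q))).

Definition drift h : R := \sum_x p x * cov (bern_prod q) h (coordR x).

Lemma expect_tilted_mixture h :
  \sum_x p x = 1 -> expect tilted_mixture h = E h + b * drift h.
Proof.
move=> sum_p.
have -> : E h = \sum_x p x * E h by rewrite -mulr_suml sum_p mul1r.
rewrite /drift mulr_sumr -big_split.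
transitivity (\sum_x E (fun z => p x * (1 - b * q) * h z + p x * b * (h z * coordR x z))).
  rewrite /expect /tilted_mixture; under eq_bigr do rewrite mulr_suml.
  by rewrite exchange_big /=; apply: eq_bigr => x _; apply: eq_bigr => z _; ring.
by apply: eq_bigr => x _; rewrite /cov expect_coordR expect_lin /=; ring.
Qed.

Lemma drift_mul (I1 I2 : {set 'I_d}) f g :
  [disjoint I1 & I2] -> I1 :|: I2 = [set: 'I_d] ->
  depends_only_on I1 f -> depends_only_on I2 g ->
  drift (fun z => f z * g z) = drift f * E g + E f * drift g.
Proof.
move=> dis cover dep_f dep_g; rewrite /drift mulr_suml mulr_sumr -big_split /=.
by apply: eq_bigr => x _; rewrite (cov_coordR_mul q x dis cover dep_f dep_g); ring.
Qed.

Lemma drift_ge0 h :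
  0 <= q <= 1 -> (forall x, 0 <= p x) -> coord_nondecr h -> 0 <= drift h.
Proof.
move=> q01 p_ge0 mono_h; apply: sumr_ge0 => x _.
by rewrite mulr_ge0 // cov_coordR_ge0.
Qed.

Lemma cov_tilted_mixture (I1 I2 : {set 'I_d}) f g :
  \sum_x p x = 1 -> [disjoint I1 & I2] -> I1 :|: I2 = [set: 'I_d] ->
  depends_only_on I1 f -> depends_only_on I2 g ->
  cov tilted_mixture f g = - (b ^+ 2 * (drift f * drift g)).
Proof.
move=> sum_p dis cover dep_f dep_g.
rewrite /cov !expect_tilted_mixture // (expect_indep _ dis dep_f dep_g).
rewrite (drift_mul dis cover dep_f dep_g); ring.
Qed.

Lemma tilted_mixture_negatively_associated :
  0 <= q <= 1 -> is_pmf p -> negatively_associated tilted_mixture.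
Proof.
move=> q01 [p_ge0 sum_p] I1 I2 dis cover f g dep_f dep_g mono_f mono_g.
rewrite (cov_tilted_mixture sum_p dis cover dep_f dep_g) oppr_le0.
by rewrite mulr_ge0 ?sqr_ge0 ?mulr_ge0 ?drift_ge0.
Qed.

End TiltedMixture.

Lemma omega_half_gt0 (R : realType) (eps : R) : 0 < omega_half eps.
Proof. by rewrite /omega_half divr_gt0 ?addr_gt0 ?expR_gt0. Qed.

Lemma omega_half_lt1 (R : realType) (eps : R) : omega_half eps < 1.
Proof. by rewrite /omega_half ltr_pdivrMr ?addr_gt0 ?expR_gt0 // mul1r ltrDl. Qed.

Lemma bern_complement_density (R : fieldType) (w : R) (c : bool) :
  w != 0 -> 1 - w != 0 ->
  (if c then w else 1 - w) =
    (if c then 1 - w else 1 - (1 - w)) *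
    (1 + (w / (1 - w) - (1 - w) / w) * (c%:R - (1 - w))).
Proof. by move=> w_neq0 w_neq1; case: c => /=; field; rewrite w_neq0 w_neq1. Qed.

Lemma ue_pmf_tilted_mixture (R : realType) (d : nat) (eps : R) (p : 'I_d -> R) :
  ue_pmf eps p = tilted_mixture (1 - omega_half eps)
    (omega_half eps / (1 - omega_half eps) - (1 - omega_half eps) / omega_half eps) p.
Proof.
have w_neq0 : omega_half eps != 0 by rewrite gt_eqF ?omega_half_gt0.
have w_neq1 : 1 - omega_half eps != 0 by rewrite subr_eq0 eq_sym lt_eqF ?omega_half_lt1.
apply/funext => z; rewrite /ue_pmf /tilted_mixture; apply: eq_bigr => x _.
congr (p x * _); rewrite /bern_prod (bigD1 x) //= [in RHS](bigD1 x) //= eqxx eqb_id.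
rewrite (bern_complement_density (z x) w_neq0 w_neq1) mulrAC; congr (_ * _ * _).
apply: eq_bigr => j /negbTE neq_jx; rewrite [x == j]eq_sym neq_jx.
by case: (z j); rewrite /= ?subKr.
Qed.

Theorem mainTheorem9 (R : realType) (d : nat) (eps : R) (p : 'I_d -> R) :
  0 <= eps -> is_pmf p -> negatively_associated (ue_pmf eps p).
Proof.
move=> _ pmf_p; rewrite ue_pmf_tilted_mixture.
apply: tilted_mixture_negatively_associated pmf_p.
have := omega_half_gt0 eps; have := omega_half_lt1 eps.
by move=> w_lt1 w_gt0; apply/andP; split; lra.
Qed.
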